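(* Let $n\ge1$ and let $\Gamma$ be a finite undirected graph on exactly $n$ vertices, without loops but possibly with multiple edges, together with an edge colouring $c:E(\Gamma)\to\{\text{magenta},\text{yellow},\text{cyan}\}$ that is injective on the set of edges joining any given pair of distinct vertices. Then $\Sigma(\Gamma)\le n$, with equality if and only if every cycle of $\Gamma$ is monochromatic (different cycles may have different colours).
   Context: Let $\Gamma_{my}$ (resp. $\Gamma_{yc}$, $\Gamma_{mc}$) be the spanning subgraph of $\Gamma$ with all vertices of $\Gamma$ and only the magenta and yellow (resp. yellow and cyan, magenta and cyan) edges. For a connected component $C$ of $\Gamma$ and colours $\in\{my,yc,mc\}$, let $\operatorname{val}_{colors}(C)$ be the number of connected components of $C\cap\Gamma_{colors}$. Define \[\Sigma(\Gamma)=\sum_{C}\big(\operatorname{val}_{my}(C)+\operatorname{val}_{yc}(C)+\operatorname{val}_{mc}(C)-2\big),\] the sum over all connected components $C$ of $\Gamma$. A cycle is a closed path $x_0e_0x_1e_1\dots x_ke_kx_0$ with pairwise distinct vertices $x_i$ and edges $e_i$ joining consecutive vertices; it is monochromatic if all its edges have the same colour. *)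

From mathcomp Require Import all_boot all_order all_algebra.
Set Implicit Arguments. Unset Strict Implicit. Unset Printing Implicit Defensive.

Definition colour := 'I_3.
Definition magenta : colour := @Ordinal 3 0 erefl.
Definition yellow  : colour := @Ordinal 3 1 erefl.
Definition cyan    : colour := @Ordinal 3 2 erefl.

Definition col_my : {set colour} := [set magenta; yellow].
Definition col_yc : {set colour} := [set yellow; cyan].
Definition col_mc : {set colour} := [set magenta; cyan].
Definition col_all : {set colour} := setT.

Section Graph.
(* A finite multigraph on the vertex set 'I_n: a finite type E of edges,
   each edge e having (unordered) endpoints ends e (stored as an ordered
   pair, orientation irrelevant) and a colour col e. *)
Variables (n : nat) (E : finType) (ends : E -> 'I_n * 'I_n) (col : E -> colour).

Definition joins (e : E) (x y : 'I_n) : bool :=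
  (ends e == (x, y)) || (ends e == (y, x)).

Definition loopless : Prop := forall e : E, (ends e).1 != (ends e).2.

Definition colouring_injective_on_pairs : Prop :=
  forall (x y : 'I_n) (e e' : E), x != y -> joins e x y -> joins e' x y ->
    col e = col e' -> e = e'.

Definition adj (S : {set colour}) : rel 'I_n :=
  fun x y => [exists e, (col e \in S) && joins e x y].

Definition comp_of (S : {set colour}) (x : 'I_n) : {set 'I_n} :=
  [set y | connect (adj S) x y].

Definition components : {set {set 'I_n}} := [set comp_of col_all x | x : 'I_n].

(* number of connected components of C /\ Gamma_S *)
Definition val (S : {set colour}) (C : {set 'I_n}) : nat :=
  #|[set comp_of S x | x in C]|.

Definition Sigma : int :=
  (\sum_(C in components)
     ((val col_my C)%:Z + (val col_yc C)%:Z + (val col_mc C)%:Z - 2%:Z))%R.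

(* a cycle x_0 e_0 x_1 e_1 ... x_k e_k x_0, given by v : 'I_(k+1) -> vertices
   and e : 'I_(k+1) -> edges, with pairwise distinct vertices, pairwise
   distinct edges, and e_i joining x_i and x_{i+1} (indices mod k+1). *)
Definition is_cycle (k : nat) (v : 'I_k.+1 -> 'I_n) (e : 'I_k.+1 -> E) : Prop :=
  injective v /\ injective e /\ forall i : 'I_k.+1, joins (e i) (v i) (v (ordS i)).

Definition monochromatic (k : nat) (e : 'I_k.+1 -> E) : Prop :=
  forall i j : 'I_k.+1, col (e i) = col (e j).

Definition all_cycles_monochromatic : Prop :=
  forall (k : nat) (v : 'I_k.+1 -> 'I_n) (e : 'I_k.+1 -> E),
    is_cycle v e -> monochromatic e.
End Graph.

(* For a set F of edges let k(F) be the number of components of the spanning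
   subgraph with edge set F, and F_S the edges of F with colour in S. The defect
     Phi(F) = n + 2 k(F) - k(F_my) - k(F_yc) - k(F_mc)
   vanishes on the empty set and equals n - Sigma on the whole edge set. Adding
   an edge e to F raises Phi by the number of pairs S containing the colour of
   e in which e joins two components of F_S, minus twice [e joins two
   components of F]. As every colour lies in exactly two pairs, this increment
   is 0 when e joins two components of F and nonnegative otherwise, so Phi is
   monotone and Sigma <= n.
   If all cycles are monochromatic and the ends of e are joined in F, a simple
   path joining them closes up with e to a cycle, hence has the colour of e,
   and the increment is again 0: Phi vanishes everywhere. If a cycle has edges
   e, e' of different colours, take the pair S containing the colour of e but
   not that of e'; adding e to the rest of the cycle joins no components of F
   but two components of F_S, so Phi(E) >= 1. *)

From Pilot Require Import Defs.
From mathcomp Require Import all_boot all_order all_algebra zify.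
Import Order.TTheory GRing.Theory Num.Theory.
Set Implicit Arguments. Unset Strict Implicit. Unset Printing Implicit Defensive.

Section SpanningSubgraph.
Variables (n : nat) (E : finType) (ends : E -> 'I_n * 'I_n).
Implicit Types (F G : {set E}) (e f : E) (x y z : 'I_n).

Lemma joinsC f x y : joins ends f x y = joins ends f y x.
Proof. by rewrite /joins orbC. Qed.

Lemma joins_ends f : joins ends f (ends f).1 (ends f).2.
Proof. by rewrite /joins -surjective_pairing eqxx. Qed.

Lemma joins_same_ends f x y x' y' : joins ends f x y -> joins ends f x' y' ->
  (x = x' /\ y = y') \/ (x = y' /\ y = x').
Proof.
by rewrite /joins => /orP[]/eqP-> /orP[]/eqP[-> ->]; [left|right|right|left].
Qed.

Definition span_adj F : rel 'I_n := fun x y => [exists f in F, joins ends f x y].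

Definition span_comp F x : {set 'I_n} := [set y | connect (span_adj F) x y].

Definition ncomp F : nat := #|[set span_comp F x | x : 'I_n]|.

Definition merges F e : bool := ~~ connect (span_adj F) (ends e).1 (ends e).2.

Lemma span_adj_sym F : symmetric (span_adj F).
Proof. by move=> x y; apply: eq_existsb => f; rewrite joinsC. Qed.

Lemma span_connect_sym F : connect_sym (span_adj F).
Proof. exact/sym_connect_sym/span_adj_sym. Qed.

Lemma span_adjS F G : F \subset G -> subrel (span_adj F) (span_adj G).
Proof.
move=> sFG x y /existsP[f /andP[fF jf]].
by apply/existsP; exists f; rewrite (subsetP sFG).
Qed.

Lemma span_connectS F G : F \subset G ->
  subrel (connect (span_adj F)) (connect (span_adj G)).
Proof. by move=> sFG; apply: connect_sub => x y /(span_adjS sFG)/connect1. Qed.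

Lemma merges_joins F f x y :
  joins ends f x y -> merges F f = ~~ connect (span_adj F) x y.
Proof.
rewrite /merges => /(joins_same_ends (joins_ends f)) [[-> ->] | [-> ->]] //.
by rewrite span_connect_sym.
Qed.

Lemma mergesS F G e : F \subset G -> merges G e -> merges F e.
Proof. by move=> sFG; apply: contra; apply: span_connectS. Qed.

Lemma mem_span_comp F x y : (y \in span_comp F x) = connect (span_adj F) x y.
Proof. by rewrite inE. Qed.

Lemma span_comp_eq F x y : (span_comp F x == span_comp F y) = connect (span_adj F) x y.
Proof.
apply/eqP/idP => [eqxy | cxy]; first by rewrite -mem_span_comp eqxy mem_span_comp.
by apply/setP => z; rewrite !inE (same_connect (span_connect_sym F) cxy).
Qed.

Lemma sub_span_comp F G x y : F \subset G ->
  (span_comp F y \subset span_comp G x) = (span_comp G x == span_comp G y).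
Proof.
move=> sFG; rewrite span_comp_eq; apply/subsetP/idP => [sub | cxy z].
  by rewrite -mem_span_comp sub // mem_span_comp connect0.
by rewrite !mem_span_comp => /(span_connectS sFG); apply: connect_trans.
Qed.

Lemma span_adjU1 F e x y :
  span_adj (e |: F) x y = span_adj F x y || joins ends e x y.
Proof.
apply/existsP/orP => [[f /andP[]] | [/existsP[f /andP[fF jf]] | je]].
- rewrite in_setU1 => /orP[/eqP-> | fF jf]; first by right.
  by left; apply/existsP; exists f; rewrite fF.
- by exists f; rewrite in_setU1 fF orbT.
- by exists e; rewrite setU11.
Qed.

Lemma ncomp0 : ncomp set0 = n.
Proof.
have comp0 x : span_comp set0 x = [set x].
  apply/setP => y; rewrite !inE; apply/idP/eqP => [|<-]; last exact: connect0.
  by case/connectP=> [[|z p] //= /andP[/existsP[f]]]; rewrite inE.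
by rewrite /ncomp (eq_imset _ comp0) card_imset ?card_ord //; apply: set1_inj.
Qed.

Section AddEdge.
Variables (F : {set E}) (e : E).
Local Notation a := (ends e).1.
Local Notation b := (ends e).2.
Local Notation c := (connect (span_adj F)).

Lemma connect_span_adjU1 x y : connect (span_adj (e |: F)) x y =
  [|| c x y, c x a && c b y | c x b && c a y].
Proof.
have cF := span_connectS (subsetUr [set e] F).
apply/idP/idP => [|/or3P[/cF // | /andP[xa cby] | /andP[xb ay]]].
- set P := [pred z | [|| c x z, c x a && c b z | c x b && c a z]].
  suff /closed_connect clP : closed (span_adj (e |: F)) P.
    by move=> /clP; rewrite !inE connect0.
  apply: intro_closed; first exact: span_connect_sym.
  move=> u w; rewrite span_adjU1 !inE.
  case/orP=> [/connect1 uw | /joins_same_ends/(_ (joins_ends e))].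
    by case/or3P=> [xu | /andP[-> bu] | /andP[-> au]];
       rewrite ?(connect_trans xu uw) ?(connect_trans bu uw)
               ?(connect_trans au uw) ?orbT.
  by case=> -[-> ->] /or3P[-> | /andP[-> _] | /andP[-> _]]; rewrite connect0 ?orbT.
- apply: connect_trans (cF _ _ xa) (connect_trans _ (cF _ _ cby)).
  by apply: connect1; rewrite span_adjU1 joins_ends orbT.
- apply: connect_trans (cF _ _ xb) (connect_trans _ (cF _ _ ay)).
  by apply: connect1; rewrite span_adjU1 joinsC joins_ends orbT.
Qed.

Lemma span_compU1 x : span_comp (e |: F) x =
  if c x a || c x b then span_comp F a :|: span_comp F b else span_comp F x.
Proof.
have symF := span_connect_sym F.
apply/setP => z; rewrite !inE connect_span_adjU1.
case: (boolP (c x a)) => [xa | nxa] /=.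
  by rewrite !inE (same_connect symF xa z); case: (c a z); rewrite /= ?andbF ?orbF.
case: (boolP (c x b)) => [xb | nxb] /=; last by rewrite orbF inE.
by rewrite !inE (same_connect symF xb z) orbC; case: (c b z); rewrite /= ?andbF ?orbF.
Qed.

Lemma ncompU1 : ncomp (e |: F) + merges F e = ncomp F.
Proof.
rewrite /ncomp /merges.
set A := span_comp F a; set B := span_comp F b.
set P := [set span_comp F x | x : 'I_n].
pose h X := if (X == A) || (X == B) then A :|: B else X.
have -> : [set span_comp (e |: F) x | x : 'I_n] = h @: P.
  rewrite -imset_comp; apply: eq_imset => x.
  by rewrite /= span_compU1 /h /A /B !span_comp_eq.
case: (boolP (c a b)) => [ab | nab] /=.
  have eqAB : A = B by apply/eqP; rewrite span_comp_eq.
  have hid : h =1 id by move=> X; rewrite /h -eqAB setUid orbb; case: eqP.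
  by rewrite addn0 (eq_imset _ hid) imset_id.
have neAB : A != B by rewrite span_comp_eq.
have BPA : B \in P :\ A by rewrite !inE eq_sym neAB imset_f.
set Q := (P :\ A) :\ B.
have PE : P = A |: (B |: Q) by rewrite setD1K // setD1K // imset_f.
have hQ : {in Q, h =1 id} by move=> X; rewrite /h !inE => /and3P[/negbTE-> /negbTE->].
have ABQ : A :|: B \notin Q.
  apply/negP; rewrite !inE => /and3P[_ neA /imsetP[z _ ABz]].
  have : a \in span_comp F z by rewrite -ABz !inE connect0.
  by rewrite mem_span_comp -span_comp_eq => /eqP zA; rewrite ABz zA eqxx in neA.
rewrite [in RHS]PE {1}PE !imsetU1 (eq_in_imset hQ) imset_id.
have [-> ->] : h A = A :|: B /\ h B = A :|: B by rewrite /h !eqxx orbT.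
by rewrite setUA setUid !cardsU1 ABQ !inE !eqxx (negbTE neAB) /= addn1.
Qed.
End AddEdge.
End SpanningSubgraph.

Section GrowingSets.
Variable T : finType.

Lemma setU1_homo_le d (R : porderType d) (f : {set T} -> R) :
  (forall A x, (f A <= f (x |: A))%O) -> {homo f : A B / A \subset B >-> (A <= B)%O}.
Proof.
move=> fU1 A B /setUidPr <-; rewrite -(set_enum B).
elim: (enum B) => [|x s IHs]; first by rewrite set_nil setU0.
by rewrite set_cons setUCA; apply: le_trans IHs (fU1 _ _).
Qed.

Lemma setU1_invariant R (f : {set T} -> R) :
  (forall A x, f (x |: A) = f A) -> forall A, f A = f set0.
Proof.
move=> fU1 A; rewrite -(set_enum A).
by elim: (enum A) => [|x s IHs]; rewrite ?set_nil // set_cons fU1.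
Qed.

End GrowingSets.

Section Defect.
Variables (n : nat) (E : finType) (ends : E -> 'I_n * 'I_n) (col : E -> colour).
Implicit Types (F : {set E}) (e : E) (S : {set colour}).
Local Notation ncomp := (ncomp ends).
Local Notation merges := (merges ends).

Definition col_edges S : {set E} := [set f | col f \in S].

Local Open Scope ring_scope.

Definition defect F : int :=
  n%:Z + 2 * (ncomp F)%:Z - (ncomp (F :&: col_edges col_my))%:Z
  - (ncomp (F :&: col_edges col_yc))%:Z - (ncomp (F :&: col_edges col_mc))%:Z.

Definition merges_col F e S : bool := (col e \in S) && merges (F :&: col_edges S) e.

Lemma ncompU1_col F e S :
  (ncomp ((e |: F) :&: col_edges S) + merges_col F e S = ncomp (F :&: col_edges S))%N.
Proof.
rewrite /merges_col; case: (boolP (col e \in S)) => eS /=.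
  have -> : (e |: F) :&: col_edges S = e |: (F :&: col_edges S).
    by apply/setP => f; rewrite !inE; case: eqP => // ->; rewrite eS.
  exact: ncompU1.
have -> : (e |: F) :&: col_edges S = F :&: col_edges S.
  by apply/setP => f; rewrite !inE; case: eqP => // ->; rewrite (negbTE eS) !andbF.
exact: addn0.
Qed.

Lemma defectU1 F e : defect (e |: F) =
  defect F + (merges_col F e col_my + merges_col F e col_yc + merges_col F e col_mc)%N%:Z
  - 2 * (merges F e)%:Z.
Proof.
have := ncompU1 ends F e; have := ncompU1_col F e col_my.
have := ncompU1_col F e col_yc; have := ncompU1_col F e col_mc.
rewrite /defect; lia.
Qed.

Lemma colour_in_two_pairs (c : colour) :
  ((c \in col_my) + (c \in col_yc) + (c \in col_mc) = 2)%N.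
Proof. by case: c => -[|[|[|m]]] //= lt_m3; rewrite !inE. Qed.

(* Such an edge also joins two components of F_S for both pairs S containing
   its colour, which cancels the -2. *)
Lemma defectU1_merges F e : merges F e -> defect (e |: F) = defect F.
Proof.
move=> mFe; have mS S : merges_col F e S = (col e \in S).
  by rewrite /merges_col (mergesS _ mFe) ?andbT // subsetIl.
by rewrite defectU1 !mS colour_in_two_pairs mFe; lia.
Qed.

Lemma defectU1_ge F e : defect F <= defect (e |: F).
Proof.
case: (boolP (merges F e)) => [/defectU1_merges-> // | nmFe].
by rewrite defectU1 (negbTE nmFe) mulr0 subr0 lerDl.
Qed.

Definition colour_pairs : seq {set colour} := [:: col_my; col_yc; col_mc].

Lemma colour_pair_sep (c c' : colour) : c != c' ->
  exists2 S, S \in colour_pairs & (c \in S) && (c' \notin S).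
Proof.
move=> neq; apply/hasP; move: c c' neq.
by do 2!case=> -[|[|[|?]]] //= ?; rewrite !inE.
Qed.

Lemma defectU1_gt F e S : S \in colour_pairs ->
  ~~ merges F e -> merges_col F e S -> defect F < defect (e |: F).
Proof.
rewrite defectU1 => pairS /negbTE-> mS; rewrite mulr0 subr0 ltrDl ltz_nat.
by move: pairS; rewrite !inE => /or3P[]/eqP eS; rewrite -eS mS ?addn1 ?addnS.
Qed.

Lemma defectU1_col_connected F e :
  (connect (span_adj ends F) (ends e).1 (ends e).2 ->
   connect (span_adj ends (F :&: col_edges [set col e])) (ends e).1 (ends e).2) ->
  defect (e |: F) = defect F.
Proof.
move=> cF_col; case: (boolP (merges F e)) => [/defectU1_merges // | nmFe].
have cFe_col := cF_col (negbNE nmFe).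
have nmS S : merges_col F e S = false.
  rewrite /merges_col; case: (boolP (col e \in S)) => //= eS; apply/negbF.
  have sub : F :&: col_edges [set col e] \subset F :&: col_edges S.
    by apply/setIS/subsetP => f; rewrite !inE => /eqP->.
  exact: span_connectS sub _ _ cFe_col.
by rewrite defectU1 !nmS (negbTE nmFe) /=; lia.
Qed.

Lemma defect_set0 : defect set0 = 0.
Proof. by rewrite /defect !set0I ncomp0; lia. Qed.

Lemma defect_ge0 F : 0 <= defect F.
Proof.
by rewrite -defect_set0; apply: setU1_homo_le (@defectU1_ge) _ _ (sub0set F).
Qed.

End Defect.

Section SigmaAsComponentCounts.
Variables (n : nat) (E : finType) (ends : E -> 'I_n * 'I_n) (col : E -> colour).
Local Notation span_comp := (span_comp ends).
Local Notation ncomp := (ncomp ends).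
Local Notation col_edges := (col_edges col).

Lemma comp_ofE S x : comp_of ends col S x = span_comp (col_edges S) x.
Proof.
apply/setP => y; rewrite !inE; apply: eq_connect => u w.
by apply: eq_existsb => f; rewrite inE.
Qed.

Lemma col_edges_all : col_edges col_all = setT.
Proof. by apply/setP => f; rewrite !inE. Qed.

Lemma componentsE : components ends col = [set span_comp setT x | x : 'I_n].
Proof. by apply: eq_imset => x; rewrite comp_ofE col_edges_all. Qed.

Lemma valE S C : C \in components ends col ->
  Defs.val ends col S C =
  #|[set X in [set span_comp (col_edges S) x | x : 'I_n] | X \subset C]|.
Proof.
have subT x y := sub_span_comp ends x y (subsetT (col_edges S)).
rewrite /Defs.val componentsE => /imsetP[z _ ->]; apply: eq_card => X; rewrite !inE.
apply/imsetP/andP => [[x zx ->] | [/imsetP[x _ ->]]].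
  by rewrite comp_ofE imset_f // subT span_comp_eq -mem_span_comp.
by rewrite subT span_comp_eq -mem_span_comp => zx; exists x; rewrite ?comp_ofE.
Qed.

(* Every component of a colour class lies in exactly one component of the graph. *)
Lemma sum_val S :
  (\sum_(C in components ends col) Defs.val ends col S C)%N = ncomp (col_edges S).
Proof.
set Q := [set span_comp (col_edges S) x | x : 'I_n].
have cardE C : #|[set X in Q | X \subset C]| = (\sum_(X in Q) (X \subset C))%N.
  by rewrite -sum1dep_card big_mkcondr; apply: eq_bigr => X _; case: (X \subset C).
under eq_bigr => C /(valE S) -> do rewrite cardE.
rewrite exchange_big /ncomp -/Q -sum1_card; apply: eq_bigr => _ /imsetP[y _ ->].
have subT x := sub_span_comp ends x y (subsetT (col_edges S)).
rewrite (eq_bigr (fun C => (C == span_comp setT y) : nat)) => [|C]; last first.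
  by rewrite componentsE => /imsetP[z _ ->]; rewrite subT.
rewrite (bigD1 (span_comp setT y)) /= ?eqxx ?big1 // => [C /andP[_ /negbTE->] //|].
by rewrite componentsE imset_f.
Qed.

Lemma card_components : #|components ends col| = ncomp setT.
Proof. by rewrite componentsE. Qed.

Local Open Scope ring_scope.

Lemma SigmaE : Sigma ends col =
  (ncomp (col_edges col_my))%:Z + (ncomp (col_edges col_yc))%:Z
  + (ncomp (col_edges col_mc))%:Z - 2 * (ncomp setT)%:Z.
Proof.
rewrite /Sigma sumrB !big_split /= sumr_const -!(big_morph Posz PoszD (erefl 0%:Z)).
by rewrite !sum_val card_components -[(ncomp setT)%:Z]natz mulr_natr.
Qed.

Lemma defect_setT : defect ends col setT = n%:Z - Sigma ends col.
Proof. by rewrite SigmaE /defect !setTI; lia. Qed.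

End SigmaAsComponentCounts.

Section CycleIndices.
Variable k : nat.
Implicit Types (l c : 'I_k.+1).

Lemma ordSE l : ordS l = (l + Zp1)%R.
Proof. by apply: val_inj; rewrite /= modnDmr addn1. Qed.

Lemma ordSD l c : ordS (l + c)%R = (ordS l + c)%R.
Proof. by rewrite !ordSE addrAC. Qed.

Lemma lt_ord_max l : (l < k) = (l != ord_max).
Proof. by rewrite ltn_neqAle -ltnS ltn_ord andbT. Qed.

Lemma val_ordS l : l != ord_max -> ordS l = l.+1 :> nat.
Proof. by rewrite -lt_ord_max /= => lt_lk; rewrite modn_small. Qed.

Lemma ordS_max : ordS (@ord_max k) = ord0.
Proof. by apply: val_inj; rewrite /= modnn. Qed.

End CycleIndices.

Section Cycles.
Variables (n : nat) (E : finType) (ends : E -> 'I_n * 'I_n).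
Variables (k : nat) (v : 'I_k.+1 -> 'I_n) (e : 'I_k.+1 -> E).
Hypothesis cycle_ve : is_cycle ends v e.
Implicit Types (G : {set E}) (l j : 'I_k.+1).

Lemma is_cycle_rot (c : 'I_k.+1) :
  is_cycle ends (fun l => v (l + c)%R) (fun l => e (l + c)%R).
Proof.
case: cycle_ve => inj_v [inj_e joins_e].
split; [by move=> l m /inj_v/addIr | split; first by move=> l m /inj_e/addIr].
by move=> l; rewrite -ordSD.
Qed.

Lemma cycle_connect G : (forall l, l != ord_max -> e l \in G) ->
  connect (span_adj ends G) (v ord0) (v ord_max).
Proof.
case: cycle_ve => _ [_ joins_e] eG.
suff conn t : t <= k -> connect (span_adj ends G) (v ord0) (v (inord t)).
  by rewrite -[ord_max]inord_val; apply: conn.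
elim: t => [_ | t IHt lt_tk]; first by rewrite -[ord0]inord_val connect0.
have l_max : inord t != ord_max :> 'I_k.+1.
  by rewrite -(inj_eq val_inj) /= inordK ?ltn_eqF // ltnW.
apply: connect_trans (IHt (ltnW lt_tk)) (connect1 _).
apply/existsP; exists (e (inord t)); rewrite eG //.
congr (joins _ _ _ (v _)): (joins_e (inord t)); apply: ord_inj.
by rewrite val_ordS // !inordK // ltnW.
Qed.

Lemma cycle_not_merges G : (forall l, l != ord_max -> e l \in G) ->
  ~~ merges ends G (e ord_max).
Proof.
case: cycle_ve => _ [_ joins_e] eG.
rewrite (merges_joins _ (joins_e ord_max)) ordS_max negbK span_connect_sym.
exact: cycle_connect.
Qed.

(* Deleting the last edge and another edge [e j] cuts the cycle into the arcs
   [v 0, ..., v j] and [v j.+1, ..., v k], and no remaining edge links them. *)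
Lemma cycle_cut_merges j G : j != ord_max ->
  G \subset [set e l | l : 'I_k.+1] :\: [set e ord_max; e j] ->
  merges ends G (e ord_max).
Proof.
case: cycle_ve => inj_v [inj_e joins_e] j_max sub_G.
pose A := [set v l | l in [pred l : 'I_k.+1 | l <= j]].
have memA l : (v l \in A) = (l <= j) by rewrite mem_imset.
have clA : closed (span_adj ends G) (mem A).
  apply: intro_closed; first exact: span_connect_sym.
  move=> x y /existsP[f /andP[/(subsetP sub_G)]].
  rewrite !inE => /andP[/norP[ne_max ne_j] /imsetP[l _ fl]]; subst f.
  move=> /(joins_same_ends (joins_e l)).
  have l_max : l != ord_max by apply: contra_neq ne_max => ->.
  have l_j : l != j by apply: contra_neq ne_j => ->.
  have memAS : (v l \in A) = (v (ordS l) \in A).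
    by rewrite !memA val_ordS // ltn_neqAle l_j.
  by case=> -[<- <-]; rewrite memAS.
rewrite (merges_joins _ (joins_e ord_max)) ordS_max; apply/negP => /(closed_connect clA).
by rewrite !memA leq0n /= leqNgt lt_ord_max j_max.
Qed.

End Cycles.

Section PathToCycle.
Variables (n : nat) (E : finType) (ends : E -> 'I_n * 'I_n).
Variables (F : {set E}) (e : E) (p : seq 'I_n).
Local Notation a := (ends e).1.
Local Notation b := (ends e).2.
Hypotheses (eF : e \notin F) (path_p : path (span_adj ends F) b p).
Hypotheses (uniq_p : uniq (b :: p)) (last_p : last b p = a).

Let k := size p.
Let v (l : 'I_k.+1) : 'I_n := nth b (b :: p) l.
Let ed (l : 'I_k.+1) : E :=
  if l == ord_max then e else odflt e [pick f in F | joins ends f (v l) (v (ordS l))].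

Let inj_v : injective v.
Proof. by move=> l m /eqP; rewrite nth_uniq // => /eqP/ord_inj. Qed.

Let v_max : v ord_max = a.
Proof. by rewrite /v -last_p -[last b p]/(last b (b :: p)) -nth_last. Qed.

Let ed_joins l : l != ord_max -> (ed l \in F) && joins ends (ed l) (v l) (v (ordS l)).
Proof.
move=> l_max; have /existsP[f Ff] : span_adj ends F (v l) (v (ordS l)).
  rewrite /v val_ordS //.
  by apply/(pathP b path_p); rewrite lt_ord_max.
by rewrite /ed (negbTE l_max); case: pickP => [g | /(_ f)/negbT/negP].
Qed.

Lemma path_add_edge_cycle : exists k (v : 'I_k.+1 -> 'I_n) (ed : 'I_k.+1 -> E),
  [/\ is_cycle ends v ed, ed ord_max = e & forall l, l != ord_max -> ed l \in F].
Proof.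
have edF l : l != ord_max -> ed l \in F by move=> /ed_joins/andP[].
exists k, v, ed; split=> [| |l /edF //]; last by rewrite /ed eqxx.
split=> [//|]; split=> [l m | l].
  case: (eqVneq l ord_max) => [-> | l_max]; case: (eqVneq m ord_max) => [-> | m_max] //.
  - by move=> e_m; have := edF m m_max; rewrite -e_m /ed eqxx (negbTE eF).
  - by move=> e_l; have := edF l l_max; rewrite e_l /ed eqxx (negbTE eF).
  move=> eq_lm; have /andP[_ jl] := ed_joins l_max; have /andP[_ jm] := ed_joins m_max.
  rewrite eq_lm in jl; case: (joins_same_ends jl jm) => -[/inj_v // lm /inj_v lm'].
  have := congr1 (@nat_of_ord k.+1) lm; have := congr1 (@nat_of_ord k.+1) lm'.
  by rewrite !val_ordS // => ? ?; exfalso; lia.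
case: (eqVneq l ord_max) => [-> | l_max]; last by case/andP: (ed_joins l_max).
by rewrite /ed eqxx v_max ordS_max joins_ends.
Qed.

End PathToCycle.

Section Proposition.
Variables (n : nat) (E : finType) (ends : E -> 'I_n * 'I_n) (col : E -> colour).
Local Notation defect := (defect ends col).
Local Open Scope ring_scope.

Lemma cycle_defect_pos_max k (v : 'I_k.+1 -> 'I_n) (e : 'I_k.+1 -> E) j :
  is_cycle ends v e -> col (e ord_max) != col (e j) -> 0 < defect setT.
Proof.
move=> cyc neq; have [S pairS /andP[maxS jS]] := colour_pair_sep neq.
have j_max : j != ord_max by apply: contra_neq neq => ->.
set K := [set e l | l : 'I_k.+1]; set F := K :\ e ord_max.
have inF l : l != ord_max -> e l \in F.
  by move=> l_max; rewrite !inE imset_f // andbT (inj_eq cyc.2.1).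
have mS : merges_col ends col F (e ord_max) S.
  rewrite /merges_col maxS /=; apply: (cycle_cut_merges cyc j_max).
  apply/subsetP => f; rewrite !inE negb_or => /andP[/andP[-> ->] Sf]; rewrite andbT /=.
  by apply: contraNneq jS => <-.
have gtF := defectU1_gt pairS (cycle_not_merges cyc inF) mS.
rewrite setD1K ?imset_f // in gtF.
apply: lt_le_trans (le_lt_trans (defect_ge0 ends col F) gtF) _.
exact: setU1_homo_le (defectU1_ge ends col) _ _ (subsetT K).
Qed.

Lemma nonmonochromatic_cycle_defect_pos k (v : 'I_k.+1 -> 'I_n) (e : 'I_k.+1 -> E) i j :
  is_cycle ends v e -> col (e i) != col (e j) -> 0 < defect setT.
Proof.
move=> cyc neq; pose c := (i - ord_max)%R.
apply: (cycle_defect_pos_max (j := (j - c)%R) (is_cycle_rot cyc c)).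
by rewrite subrK addrC subrK.
Qed.

Lemma defectU1_monochromatic : all_cycles_monochromatic ends col ->
  forall F f, defect (f |: F) = defect F.
Proof.
move=> mono F f; case: (boolP (f \in F)) => [fF | fNF].
  by rewrite (setUidPr _) // sub1set.
apply: defectU1_col_connected; rewrite span_connect_sym => /connectP[q path_q].
case: (shortenP path_q) => p path_p uniq_p _ a_p.
have [k [v [e [cyc e_max eF]]]] := path_add_edge_cycle fNF path_p uniq_p (esym a_p).
suff: ~~ merges ends (F :&: col_edges col [set col f]) (e ord_max).
  by rewrite e_max negbK.
apply: (cycle_not_merges cyc) => l l_max.
by rewrite !inE eF // -e_max (mono _ _ _ cyc l ord_max) eqxx.
Qed.

End Proposition.

Unset Implicit Arguments.

Theorem proposition5p1 (n : nat) (E : finType) (ends : E -> 'I_n * 'I_n)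
    (col : E -> colour) :
  1 <= n ->
  loopless ends ->
  colouring_injective_on_pairs ends col ->
  (Sigma ends col <= Posz n)%R /\
  (Sigma ends col = Posz n <-> all_cycles_monochromatic ends col).
Proof.
move=> _ _ _; have defectT := defect_setT ends col.
have := defect_ge0 ends col setT; split; first lia.
split=> [Sigma_n k v e cyc i j | mono].
  case: (eqVneq (col (e i)) (col (e j))) => // neq; exfalso.
  by have := nonmonochromatic_cycle_defect_pos cyc neq; lia.
have := setU1_invariant (defectU1_monochromatic mono) setT.
by rewrite defect_set0; lia.
Qed.
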